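(* Suppose Assumption 7.1 holds. Then there exists a unique pair $0<a_*<b_*<\infty$ satisfying $$\int_{a_*}^{b_*}(\pi_2(x)-\pi_2(a_* ))m(x)\,dx+\frac{c_1-c_2}{2s(b_* )}=0,\qquad \int_{a_*}^{b_*}(\pi_1(x)-\pi_1(b_* ))m(x)\,dx+\frac{c_1-c_2}{2s(a_* )}=0,$$ equivalently $\lambda(a_*,b_* )=\pi_1(b_* )=\pi_2(a_* )$.
   Context: Setup. $\mu,\sigma:[0,\infty)\to\mathbb R$ are continuous with $\sigma(x)>0$ for $x>0$ (coefficients of a diffusion on $[0,\infty)$ for which $0$ is unattainable and $\infty$ is natural). $s(x)=\exp\{-\int_1^x\frac{2\mu(y)}{\sigma^2(y)}dy\}$, $m(x)=\frac{1}{\sigma^2(x)s(x)}$ for $x>0$, $M[a,b]=\int_a^bm(x)dx$. Constants $0<c_1<c_2$, nonnegative function $h$. Define $\pi_1(x)=h(x)+c_1\mu(x)$, $\pi_2(x)=h(x)+c_2\mu(x)$, and for $0<a<b$, $\lambda(a,b)=\frac{1}{M[a,b]}\big[\int_a^bh(x)m(x)dx+\frac{c_1}{2s(b)}-\frac{c_2}{2s(a)}\big]$. Assumption 7.1: (i) $h$ and $\mu$ are continuously differentiable, $h'(x)>0$ for all $x>0$, and $h(0)=\mu(0)=0$. (ii) For $i=1,2$ there exists $\hat x_i>0$ such that $\pi_i$ is strictly increasing on $(0,\hat x_i)$ and strictly decreasing on $[\hat x_i,\infty)$; moreover $\lim_{x\to\infty}\pi_1(x)<0$, so that there is $b_0>\hat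 x_1$ with $\pi_1(b_0)=0$. (iii) $\liminf_{a\downarrow0}\Big[\int_0^{b_0}[\pi_1(y)-\pi_1(b_0)]m(y)\,dy+\frac{c_1-c_2}{2s(a)}\Big]>0$. *)

From Stdlib Require Import Reals.
From Coquelicot Require Import Coquelicot.
Open Scope R_scope.

Definition cont_nonneg (f : R -> R) : Prop :=
  forall x, 0 <= x ->
    filterlim f (within (fun y => 0 <= y) (locally x)) (locally (f x)).

Definition C1_nonneg (f : R -> R) (f' : R -> R) : Prop :=
  (forall x, 0 < x -> is_derive f x (f' x)) /\
  filterlim (fun y => (f y - f 0) / y) (at_right 0) (locally (f' 0)) /\
  cont_nonneg f'.

Definition sdens (mu sigma : R -> R) (x : R) : R :=
  exp (- RInt (fun y => 2 * mu y / (sigma y ^ 2)) 1 x).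

Definition mdens (mu sigma : R -> R) (x : R) : R :=
  / (sigma x ^ 2 * sdens mu sigma x).

Definition Mspeed (mu sigma : R -> R) (a b : R) : R :=
  RInt (mdens mu sigma) a b.

Definition Sscale (mu sigma : R -> R) (a b : R) : R :=
  RInt (sdens mu sigma) a b.

(* Feller boundary classification (reference point 1).
   0 unattainable  <->  Sigma(0) = int_0^1 M[0,y] s(y) dy = +oo
   (written as the monotone limit a -> 0+ of int_a^1 M[a,y] s(y) dy). *)
Definition zero_unattainable (mu sigma : R -> R) : Prop :=
  filterlim (fun a => RInt (fun y => Mspeed mu sigma a y * sdens mu sigma y) a 1)
    (at_right 0) (Rbar_locally p_infty).

Definition infinity_natural (mu sigma : R -> R) : Prop :=
  filterlim (fun b => RInt (fun y => Sscale mu sigma 1 y * mdens mu sigma y) 1 b)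
    (Rbar_locally p_infty) (Rbar_locally p_infty) /\
  filterlim (fun b => RInt (fun y => Mspeed mu sigma 1 y * sdens mu sigma y) 1 b)
    (Rbar_locally p_infty) (Rbar_locally p_infty).

Definition lambda_ab (mu sigma h : R -> R) (c1 c2 a b : R) : R :=
  / Mspeed mu sigma a b *
  (RInt (fun x => h x * mdens mu sigma x) a b
   + c1 / (2 * sdens mu sigma b) - c2 / (2 * sdens mu sigma a)).

Definition assumption71 (mu sigma h : R -> R) (c1 c2 : R) : Prop :=
  let pi1 := fun x => h x + c1 * mu x in
  let pi2 := fun x => h x + c2 * mu x in
  (exists h' mu', C1_nonneg h h' /\ C1_nonneg mu mu' /\
     (forall x, 0 < x -> 0 < h' x)) /\
  h 0 = 0 /\ mu 0 = 0 /\
  (exists xh1 xh2, 0 < xh1 /\ 0 < xh2 /\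
     (forall x y, 0 < x -> x < y -> y < xh1 -> pi1 x < pi1 y) /\
     (forall x y, xh1 <= x -> x < y -> pi1 y < pi1 x) /\
     (forall x y, 0 < x -> x < y -> y < xh2 -> pi2 x < pi2 y) /\
     (forall x y, xh2 <= x -> x < y -> pi2 y < pi2 x) /\
     (exists l : Rbar, is_lim pi1 p_infty l /\ Rbar_lt l 0) /\
  (* (iii): liminf_{a -> 0+} [ ... ] > 0, for the point b0 > xh1 with pi1 b0 = 0 *)
     (forall b0, xh1 < b0 -> pi1 b0 = 0 ->
        exists eps, 0 < eps /\ exists delta, 0 < delta /\
          forall a, 0 < a -> a < delta ->
            eps <= RInt (fun y => (pi1 y - pi1 b0) * mdens mu sigma y) a b0
                   + (c1 - c2) / (2 * sdens mu sigma a))).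

(* Through the primitives Fh of h m and Fm of m and through u = 1/(2s), whose derivative is
   mu m, both equations become algebraic: they read M[a,b] (lambda(a,b) - pi2(a)) = 0 and
   M[a,b] (lambda(a,b) - pi1(b)) = 0.  A solution therefore has pi1(b) = pi2(a), and also
   a < xh2 and xh1 < b: otherwise the monotonicity of pi1 or pi2 on [a, b] together with
   c1 < c2 makes one equation negative.  Two solutions with a < a' cannot coexist: the
   difference of their second equations is a sum of integrals of pi - pi2(a) over [a, a']
   and [b', b], which are nonnegative, and of a positive term.  For existence, let beta(a)
   be the point of the decreasing branch [xh1, b0] of pi1 (b0 its zero) with
   pi1(beta(a)) = pi2(a).  The first equation along (a, beta(a)) is positive for small a by
   Assumption 7.1(iii), and negative where beta(a) = a, or else where a reaches xh2 or
   pi2(a) reaches pi1(xh1); the intermediate value theorem gives a zero. *)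

From Stdlib Require Import Reals Lra ClassicalEpsilon.
From Coquelicot Require Import Coquelicot.
Open Scope R_scope.

(** * Continuity, limits and inverses of real functions *)

Lemma continuous_Rplus (f g : R -> R) x :
  continuous f x -> continuous g x -> continuous (fun y => f y + g y) x.
Proof. intros; apply (continuous_plus (V := R_NormedModule)); auto. Qed.

Lemma continuous_Rminus (f g : R -> R) x :
  continuous f x -> continuous g x -> continuous (fun y => f y - g y) x.
Proof. intros; apply (continuous_minus (V := R_NormedModule)); auto. Qed.

Lemma continuous_Rmult (f g : R -> R) x :
  continuous f x -> continuous g x -> continuous (fun y => f y * g y) x.
Proof. intros; apply (continuous_mult f g); auto. Qed.

Lemma continuous_Ropp (f : R -> R) x :
  continuous f x -> continuous (fun y => - f y) x.
Proof. intros; apply (continuous_opp (V := R_NormedModule)); auto. Qed.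

Lemma continuous_Rsqr (f : R -> R) x :
  continuous f x -> continuous (fun y => f y ^ 2) x.
Proof.
  intros Hf. apply (continuous_ext (fun y => f y * f y)); [intros; simpl; ring |].
  now apply continuous_Rmult.
Qed.

Lemma continuous_Rdiv (f g : R -> R) x :
  continuous f x -> continuous g x -> g x <> 0 -> continuous (fun y => f y / g y) x.
Proof. intros Hf Hg Hx. apply continuous_Rmult; [exact Hf | now apply continuous_Rinv_comp]. Qed.

(* Dispatching on the head symbol matters: a failed [apply] of a wrong combinator unfolds
   [continuous] into filters and is very slow.  Nonzero-denominator side goals are left open. *)
Ltac solve_continuous :=
  repeat match goal with
  | |- continuous (fun y => ?c) _ => apply continuous_const
  | |- continuous (fun y => y) _ => apply continuous_id
  | |- continuous (fun y => @?f y - @?g y) _ => apply (continuous_Rminus f g)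
  | |- continuous (fun y => @?f y + @?g y) _ => apply (continuous_Rplus f g)
  | |- continuous (fun y => @?f y * @?g y) _ => apply (continuous_Rmult f g)
  | |- continuous (fun y => @?f y / @?g y) _ => apply (continuous_Rdiv f g)
  | |- continuous (fun y => - @?f y) _ => apply (continuous_Ropp f)
  | |- continuous (fun y => / @?f y) _ => apply (continuous_Rinv_comp f)
  | |- continuous (fun y => @?f y ^ 2) _ => apply (continuous_Rsqr f)
  | |- continuous (fun y => exp (@?f y)) _ => apply (continuous_exp_comp f)
  | |- continuous (fun y => ?g (@?f y)) _ => apply (continuous_comp f g)
  | _ => assumption
  end.

Lemma cont_nonneg_continuous f x : cont_nonneg f -> 0 < x -> continuous f x.
Proof.
  intros Hf Hx P HP. change (locally x (fun y => P (f y))).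
  apply (filter_imp (fun y => 0 < y /\ (0 <= y -> P (f y)))).
  - intros y [Hy HPy]. apply HPy. lra.
  - apply filter_and; [exact (open_gt 0 x Hx) | exact (Hf x (Rlt_le _ _ Hx) P HP)].
Qed.

Lemma cont_nonneg_at_right f : cont_nonneg f -> filterlim f (at_right 0) (locally (f 0)).
Proof.
  intros Hf P HP. change (locally 0 (fun y => 0 < y -> P (f y))).
  apply (filter_imp (fun y => 0 <= y -> P (f y))).
  - intros y HPy Hy. apply HPy. lra.
  - exact (Hf 0 (Rle_refl 0) P HP).
Qed.

Lemma C1_nonneg_continuous f f' x : C1_nonneg f f' -> 0 < x -> continuous f x.
Proof.
  intros [Hd _] Hx. apply (ex_derive_continuous (V := R_NormedModule)).
  exists (f' x). now apply Hd.
Qed.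

Lemma C1_nonneg_at_right f f' : C1_nonneg f f' -> filterlim f (at_right 0) (locally (f 0)).
Proof.
  intros [_ [Hq _]].
  apply (filterlim_ext_loc (fun y => f 0 + y * ((f y - f 0) / y))).
  - exists (mkposreal 1 Rlt_0_1). intros y _ Hy. simpl. field. lra.
  - assert (L : filterlim (fun y => plus (f 0) (mult y ((f y - f 0) / y))) (at_right 0)
                  (locally (plus (f 0) (mult 0 (f' 0))))).
    { apply (filterlim_comp_2 (G := locally (f 0)) (H := locally (mult 0 (f' 0)))
        (fun _ => f 0) (fun y => mult y ((f y - f 0) / y)) plus).
      - apply filterlim_const.
      - apply (filterlim_comp_2 (G := locally 0) (H := locally (f' 0))
          (fun y => y) (fun y => (f y - f 0) / y) mult);
          [| exact Hq | apply (filterlim_mult (K := R_AbsRing))].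
        apply (filterlim_filter_le_1 (F := locally 0));
          [apply filter_le_within | apply filterlim_id].
      - apply (filterlim_plus (V := R_NormedModule)). }
    replace (plus (f 0) (mult 0 (f' 0))) with (f 0) in L by (cbn; ring). exact L.
Qed.

Lemma filterlim_gt {T} {F : (T -> Prop) -> Prop} {FF : Filter F} (f : T -> R) l r :
  filterlim f F (locally l) -> r < l -> F (fun x => r < f x).
Proof.
  intros Hf Hr. apply (Hf (fun y => r < y)).
  exists (mkposreal (l - r) ltac:(lra)). intros y Hy.
  apply Rabs_lt_between' in Hy. simpl in Hy. lra.
Qed.

Lemma filterlim_lt {T} {F : (T -> Prop) -> Prop} {FF : Filter F} (f : T -> R) l r :
  filterlim f F (locally l) -> l < r -> F (fun x => f x < r).
Proof.
  intros Hf Hr. apply (Hf (fun y => y < r)).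
  exists (mkposreal (r - l) ltac:(lra)). intros y Hy.
  apply Rabs_lt_between' in Hy. simpl in Hy. lra.
Qed.

Lemma filterlim_Rplus_scal {T} {F : (T -> Prop) -> Prop} {FF : Filter F}
  (f g : T -> R) c lf lg :
  filterlim f F (locally lf) -> filterlim g F (locally lg) ->
  filterlim (fun x => f x + c * g x) F (locally (lf + c * lg)).
Proof.
  intros Hf Hg.
  apply (filterlim_comp_2 (G := locally lf) (H := locally (scal c lg))
           f (fun x => scal c (g x)) plus Hf).
  - apply (filterlim_comp _ _ _ g (scal c) _ _ _ Hg), (filterlim_scal_r (V := R_NormedModule)).
  - apply (filterlim_plus (V := R_NormedModule)).
Qed.

Lemma at_right_witness (P : R -> Prop) c :
  0 < c -> at_right 0 P -> exists x, 0 < x < c /\ P x.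
Proof.
  intros Hc HP.
  assert (Hlt : at_right 0 (fun x => 0 < x < c)).
  { exists (mkposreal c Hc). intros x Hx Hx0.
    apply Rabs_lt_between' in Hx. simpl in Hx. lra. }
  destruct (Hierarchy.filter_ex _ (filter_and _ _ Hlt HP)) as [x Hx]. now exists x.
Qed.

Lemma IVT_decreasing (f : R -> R) x y :
  x <= y -> (forall z, x <= z <= y -> continuous f z) -> 0 <= f x -> f y <= 0 ->
  exists z, x <= z <= y /\ f z = 0.
Proof.
  intros Hxy Hc Hx Hy.
  destruct (Req_dec (f x) 0) as [E|E]; [exists x; split; [lra | exact E]|].
  destruct (Req_dec (f y) 0) as [E'|E']; [exists y; split; [lra | exact E']|].
  destruct (Ranalysis5.IVT_interv (fun z => - f z) x y) as [z [Hz Hfz]]; try lra.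
  - intros z Hz. apply continuity_pt_filterlim, (continuous_opp (V := R_NormedModule)), Hc, Hz.
  - destruct (Req_dec x y); [subst; lra | lra].
  - exists z. split; [exact Hz | lra].
Qed.

Lemma strict_incr_pos_at_right (f : R -> R) c :
  filterlim f (at_right 0) (locally 0) ->
  (forall x y, 0 < x -> x < y -> y < c -> f x < f y) ->
  forall x, 0 < x -> x < c -> 0 < f x.
Proof.
  intros Hlim Hf x Hx Hxc. apply Rnot_le_lt. intros Hfx.
  assert (Hmx : f (x / 2) < f x) by (apply Hf; lra).
  destruct (at_right_witness (fun z => f (x / 2) < f z) (x / 2)) as [z [Hz Hfz]].
  - lra.
  - apply (filterlim_gt f 0); [exact Hlim | lra].
  - assert (f z < f (x / 2)) by (apply Hf; lra). lra.
Qed.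

Lemma strict_incr_extend_right (f : R -> R) lo c :
  continuous f c -> (forall x y, lo < x -> x < y -> y < c -> f x < f y) ->
  forall x y, lo < x -> x < y -> y <= c -> f x < f y.
Proof.
  intros Hc Hf x y Hx Hxy Hyc.
  destruct (Rlt_or_le y c) as [Hy|Hy]; [now apply Hf|]. replace y with c by lra.
  set (m := (x + c) / 2).
  assert (Hxm : f x < f m) by (apply Hf; unfold m; lra).
  apply Rnot_le_lt. intros Hcx.
  assert (Hnear : at_left c (fun z => (z < c /\ m < z) /\ f z < f m)).
  { repeat apply filter_and.
    - unfold at_left, within. apply filter_forall. now intros z.
    - apply filter_le_within, (open_gt m c). unfold m; lra.
    - apply filter_le_within, (filterlim_lt f (f c)); [exact Hc | lra]. }
  destruct (Hierarchy.filter_ex _ Hnear) as [z [[Hzc Hmz] Hfz]].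
  assert (f m < f z) by (apply Hf; unfold m in *; lra). lra.
Qed.

Lemma antitone_onto_upper (g : R -> R) x1 x2 y0 eps :
  0 < eps -> (forall y y', y <= y' -> g y' <= g y) -> (forall y, x1 <= g y <= x2) ->
  (forall b, x1 <= b <= x2 -> exists y, g y = b) ->
  locally y0 (fun y => g y < g y0 + eps).
Proof.
  intros Heps Hanti Hrange Honto.
  destruct (Rle_lt_or_eq_dec (g y0) x2 (proj2 (Hrange y0))) as [Hlt | Heq].
  - set (b := Rmin (g y0 + eps / 2) x2).
    assert (Hb : g y0 < b <= g y0 + eps / 2).
    { split; [apply Rmin_glb_lt; lra | apply Rmin_l]. }
    destruct (Honto b) as [y1 Hy1]; [pose proof (Hrange y0); split; [lra | apply Rmin_r]|].
    assert (Hy10 : y1 < y0).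
    { apply Rnot_le_lt. intros H. pose proof (Hanti _ _ H). lra. }
    apply (filter_imp (fun y => y1 < y)); [|exact (open_gt y1 y0 Hy10)].
    intros y Hy. pose proof (Hanti _ _ (Rlt_le _ _ Hy)). lra.
  - apply filter_forall. intros y. pose proof (Hrange y). lra.
Qed.

Lemma antitone_onto_continuous (g : R -> R) x1 x2 y0 :
  (forall y y', y <= y' -> g y' <= g y) -> (forall y, x1 <= g y <= x2) ->
  (forall b, x1 <= b <= x2 -> exists y, g y = b) ->
  continuous g y0.
Proof.
  intros Hanti Hrange Honto. apply filterlim_locally. intros eps.
  pose proof (antitone_onto_upper g x1 x2 y0 eps (cond_pos eps) Hanti Hrange Honto) as Hup.
  (* The lower bound is the upper bound for the reflected function [y |-> - g (- y)]. *)
  set (g' y := - g (- y)).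
  assert (Hlow : locally (- y0) (fun y => g' y < g' (- y0) + eps)).
  { apply (antitone_onto_upper g' (- x2) (- x1)); [apply cond_pos | | |]; unfold g'.
    - intros y y' Hy. pose proof (Hanti (- y') (- y) ltac:(lra)). lra.
    - intros y. pose proof (Hrange (- y)). lra.
    - intros b Hb. destruct (Honto (- b)) as [y Hy]; [lra|].
      exists (- y). rewrite Ropp_involutive, Hy. ring. }
  pose proof (continuous_Ropp (fun y => y) y0 (continuous_id y0) _ Hlow) as Hlow'.
  apply (filter_imp (fun y => g' (- y) < g' (- y0) + eps /\ g y < g y0 + eps));
    [| apply filter_and; [exact Hlow' | exact Hup]].
  intros y [H1 H2]. unfold g' in H1. rewrite !Ropp_involutive in H1.
  apply Rabs_lt_between'. lra.
Qed.

Lemma intermediate_value_decr (f : R -> R) x1 x2 y :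
  x1 <= x2 -> (forall x, x1 <= x <= x2 -> continuous f x) -> f x2 <= y <= f x1 ->
  exists b, x1 <= b <= x2 /\ f b = y.
Proof.
  intros H12 Hc Hy.
  destruct (IVT_decreasing (fun b => f b - y) x1 x2) as [b [Hb Hfb]]; try lra.
  - intros z Hz. apply continuous_Rminus; [now apply Hc | apply continuous_const].
  - exists b. split; [exact Hb | lra].
Qed.

Lemma decreasing_inverse (f : R -> R) x1 x2 :
  x1 <= x2 -> (forall x, x1 <= x <= x2 -> continuous f x) ->
  (forall x y, x1 <= x -> x < y -> y <= x2 -> f y < f x) ->
  exists g : R -> R,
    (forall y, continuous g y) /\ (forall y y', y <= y' -> g y' <= g y) /\
    (forall y, x1 <= g y <= x2) /\ (forall y, f x2 <= y <= f x1 -> f (g y) = y) /\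
    (forall b, x1 <= b <= x2 -> g (f b) = b).
Proof.
  intros H12 Hc Hdec.
  assert (Hdec_le : forall x y, x1 <= x -> x <= y -> y <= x2 -> f y <= f x).
  { intros x y Hx Hxy Hy. destruct (Rle_lt_or_eq_dec _ _ Hxy) as [Hlt | <-]; [|lra].
    apply Rlt_le, Hdec; lra. }
  assert (Hinj : forall b b', x1 <= b <= x2 -> x1 <= b' <= x2 -> f b <= f b' -> b' <= b).
  { intros b b' Hb Hb' Hf. apply Rnot_lt_le. intros Hlt. pose proof (Hdec b b'). lra. }
  (* [g y] solves [f (g y) = y] after clamping [y] to the range [f x2, f x1] of [f]. *)
  set (clamp y := Rmax (f x2) (Rmin y (f x1))).
  assert (Hclamp : forall y, f x2 <= clamp y <= f x1).
  { intros y. pose proof (Hdec_le x1 x2). unfold clamp.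
    split; [apply Rmax_l | apply Rmax_lub; [lra | apply Rmin_r]]. }
  assert (Hclamp_id : forall y, f x2 <= y <= f x1 -> clamp y = y).
  { intros y Hy. unfold clamp. rewrite Rmin_left, Rmax_right; lra. }
  destruct (choice (fun y b => x1 <= b <= x2 /\ f b = clamp y)
              (fun y => intermediate_value_decr f x1 x2 (clamp y) H12 Hc (Hclamp y))) as [g Hg].
  assert (Hleft : forall b, x1 <= b <= x2 -> g (f b) = b).
  { intros b Hb. destruct (Hg (f b)) as [Hgb Hfgb].
    rewrite Hclamp_id in Hfgb by (split; apply Hdec_le; lra).
    apply Rle_antisym; apply Hinj; auto; lra. }
  assert (Hanti : forall y y', y <= y' -> g y' <= g y).
  { intros y y' Hy. destruct (Hg y) as [Hb Hf]. destruct (Hg y') as [Hb' Hf'].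
    apply Hinj; auto. rewrite Hf, Hf'. unfold clamp.
    apply Rle_max_compat_l, Rle_min_compat_r, Hy. }
  exists g. split; [|split; [exact Hanti | split; [|split; [|exact Hleft]]]].
  - intros y0. apply (antitone_onto_continuous g x1 x2); [exact Hanti | apply Hg |].
    intros b Hb. exists (f b). now apply Hleft.
  - intros y. apply Hg.
  - intros y Hy. destruct (Hg y) as [_ Hfy]. rewrite Hfy. now apply Hclamp_id.
Qed.

Lemma is_lim_pinfty_neg (f : R -> R) (l : Rbar) x0 :
  is_lim f p_infty l -> Rbar_lt l 0 -> exists x, x0 < x /\ f x < 0.
Proof.
  intros Hl Hneg. destruct (Hl _ (open_Rbar_lt' l 0 Hneg)) as [M HM].
  exists (Rmax M x0 + 1). split; [pose proof (Rmax_r M x0); lra |].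
  apply (HM (Rmax M x0 + 1)). pose proof (Rmax_l M x0); lra.
Qed.

(** * The free-boundary system *)

Section FreeBoundary.

Variables h mu Fh Fm u : R -> R.
Variables c1 c2 xh1 xh2 : R.

Definition pi (c x : R) : R := h x + c * mu x.

(* [excess_integral c L a b] stands for the integral of (pi c - L) m over [a, b], with [Fh],
   [Fm] primitives of h m and m, and [u] = 1/(2s) a primitive of mu m. *)
Definition excess_integral (c L a b : R) : R :=
  Fh b - Fh a + c * (u b - u a) - L * (Fm b - Fm a).

Definition eqn_lo (a b : R) : R := excess_integral c2 (pi c2 a) a b + (c1 - c2) * u b.
Definition eqn_hi (a b : R) : R := excess_integral c1 (pi c1 b) a b + (c1 - c2) * u a.
Definition solves (a b : R) : Prop := eqn_lo a b = 0 /\ eqn_hi a b = 0.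

Hypothesis Hc12 : c1 < c2.
Hypothesis Hxh1 : 0 < xh1.
Hypothesis Hxh2 : 0 < xh2.
Hypothesis Hh_cont : forall x, 0 < x -> continuous h x.
Hypothesis Hmu_cont : forall x, 0 < x -> continuous mu x.
Hypothesis HFh_cont : forall x, 0 < x -> continuous Fh x.
Hypothesis HFm_cont : forall x, 0 < x -> continuous Fm x.
Hypothesis Hu_cont : forall x, 0 < x -> continuous u x.
Hypothesis Hh_0 : filterlim h (at_right 0) (locally 0).
Hypothesis Hmu_0 : filterlim mu (at_right 0) (locally 0).
Hypothesis Hu_pos : forall x, 0 < x -> 0 < u x.
Hypothesis HFm_incr : forall a b, 0 < a -> a < b -> Fm a < Fm b.
Hypothesis Hexcess_nonneg : forall c L a b, 0 < a -> a <= b ->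
  (forall x, a < x < b -> L <= pi c x) -> 0 <= excess_integral c L a b.
Hypothesis Hexcess_nonpos : forall c L a b, 0 < a -> a <= b ->
  (forall x, a < x < b -> pi c x <= L) -> excess_integral c L a b <= 0.
Hypothesis Hpi1_incr : forall x y, 0 < x -> x < y -> y < xh1 -> pi c1 x < pi c1 y.
Hypothesis Hpi1_decr : forall x y, xh1 <= x -> x < y -> pi c1 y < pi c1 x.
Hypothesis Hpi2_incr : forall x y, 0 < x -> x < y -> y < xh2 -> pi c2 x < pi c2 y.
Hypothesis Hpi2_decr : forall x y, xh2 <= x -> x < y -> pi c2 y < pi c2 x.
Hypothesis Hpi1_neg : exists B, xh1 < B /\ pi c1 B < 0.
Hypothesis Hboundary : forall b0, xh1 < b0 -> pi c1 b0 = 0 ->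
  at_right 0 (fun a => 0 < excess_integral c1 0 a b0 + (c1 - c2) * u a).

Lemma pi_continuous c x : 0 < x -> continuous (pi c) x.
Proof.
  intros Hx. unfold pi. pose proof (Hh_cont x Hx). pose proof (Hmu_cont x Hx).
  solve_continuous.
Qed.

Lemma pi_at_right c : filterlim (pi c) (at_right 0) (locally 0).
Proof.
  pose proof (filterlim_Rplus_scal h mu c 0 0 Hh_0 Hmu_0) as L.
  rewrite Rmult_0_r, Rplus_0_l in L. exact L.
Qed.

Lemma pi_incr_closed c xh :
  (forall x y, 0 < x -> x < y -> y < xh -> pi c x < pi c y) ->
  0 < xh -> forall x y, 0 < x -> x < y -> y <= xh -> pi c x < pi c y.
Proof.
  intros Hincr Hxh. apply strict_incr_extend_right; [apply pi_continuous, Hxh | exact Hincr].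
Qed.

Lemma pi_pos_closed c xh :
  (forall x y, 0 < x -> x < y -> y < xh -> pi c x < pi c y) ->
  forall x, 0 < x <= xh -> 0 < pi c x.
Proof.
  intros Hincr x Hx.
  assert (0 < pi c (x / 2)).
  { apply (strict_incr_pos_at_right (pi c) xh); [apply pi_at_right | exact Hincr | lra | lra]. }
  assert (pi c (x / 2) < pi c x) by (apply (pi_incr_closed c xh Hincr); lra).
  lra.
Qed.

Lemma excess_integral_refl c L a : excess_integral c L a a = 0.
Proof. unfold excess_integral. ring. Qed.

Lemma eqn_hi_sub_eqn_lo a b :
  eqn_hi a b - eqn_lo a b = (pi c2 a - pi c1 b) * (Fm b - Fm a).
Proof. unfold eqn_hi, eqn_lo, excess_integral. ring. Qed.

Lemma eqn_lo_neg_outside a b :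
  0 < a -> a < b -> pi c1 b = pi c2 a -> b <= xh1 \/ xh2 <= a -> eqn_lo a b < 0.
Proof.
  intros Ha Hab Hlevel [Hb | Ha2].
  - assert (Hex : excess_integral c1 (pi c1 b) a b <= 0).
    { apply Hexcess_nonpos; [lra | lra |]. intros x Hx.
      apply Rlt_le, (pi_incr_closed c1 xh1 Hpi1_incr Hxh1); lra. }
    pose proof (eqn_hi_sub_eqn_lo a b) as E. rewrite Hlevel, Rminus_diag, Rmult_0_l in E.
    assert (eqn_hi a b < 0).
    { unfold eqn_hi. pose proof (Hu_pos a Ha). nra. }
    lra.
  - assert (Hex : excess_integral c2 (pi c2 a) a b <= 0).
    { apply Hexcess_nonpos; [lra | lra |]. intros x Hx. apply Rlt_le, Hpi2_decr; lra. }
    unfold eqn_lo. pose proof (Hu_pos b ltac:(lra)). nra.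
Qed.

Lemma solves_levels a b :
  0 < a -> a < b -> solves a b -> pi c1 b = pi c2 a /\ xh1 < b /\ a < xh2.
Proof.
  intros Ha Hab [Hlo Hhi].
  assert (Hlevel : pi c1 b = pi c2 a).
  { pose proof (eqn_hi_sub_eqn_lo a b) as E. rewrite Hlo, Hhi in E.
    pose proof (HFm_incr a b Ha Hab).
    assert (Hz : (pi c2 a - pi c1 b) * (Fm b - Fm a) = 0) by lra.
    destruct (Rmult_integral _ _ Hz); lra. }
  assert (Hin : ~ (b <= xh1 \/ xh2 <= a)).
  { intros Hout. pose proof (eqn_lo_neg_outside a b Ha Hab Hlevel Hout). lra. }
  split; [exact Hlevel|].
  split; apply Rnot_le_lt; intros H; apply Hin; [left | right]; exact H.
Qed.

Lemma solves_lt_absurd a b a' b' :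
  0 < a -> a < b -> a < a' -> a' < b' -> solves a b -> solves a' b' -> False.
Proof.
  intros Ha Hab Haa' Ha'b' Hs Hs'.
  destruct (solves_levels a b Ha Hab Hs) as [Hlev [Hb Ha2]].
  destruct (solves_levels a' b' ltac:(lra) Ha'b' Hs') as [Hlev' [Hb' Ha2']].
  assert (Hpi2 : pi c2 a < pi c2 a') by (apply Hpi2_incr; lra).
  assert (Hbb' : b' < b).
  { apply Rnot_le_lt. intros Hle. destruct (Rle_lt_or_eq_dec _ _ Hle) as [Hlt | <-]; [|lra].
    pose proof (Hpi1_decr b b' ltac:(lra) Hlt). lra. }
  assert (Hsplit : eqn_hi a b - eqn_hi a' b' =
    excess_integral c2 (pi c2 a) a a' + excess_integral c1 (pi c2 a) b' b
    + (pi c2 a' - pi c2 a) * (Fm b' - Fm a')).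
  { unfold eqn_hi, excess_integral. rewrite Hlev, Hlev'. ring. }
  assert (0 <= excess_integral c2 (pi c2 a) a a').
  { apply Hexcess_nonneg; [lra | lra |]. intros x Hx. apply Rlt_le, Hpi2_incr; lra. }
  assert (0 <= excess_integral c1 (pi c2 a) b' b).
  { apply Hexcess_nonneg; [lra | lra |]. intros x Hx.
    rewrite <- Hlev. apply Rlt_le, Hpi1_decr; lra. }
  assert (Fm a' < Fm b') by (apply HFm_incr; lra).
  destruct Hs as [_ Hhi]. destruct Hs' as [_ Hhi']. rewrite Hhi, Hhi' in Hsplit. nra.
Qed.

Lemma solves_unique a b a' b' :
  0 < a -> a < b -> 0 < a' -> a' < b' -> solves a b -> solves a' b' -> a' = a /\ b' = b.
Proof.
  intros Ha Hab Ha' Ha'b' Hs Hs'.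
  destruct (Rtotal_order a a') as [Hlt | [<- | Hgt]].
  - destruct (solves_lt_absurd a b a' b' Ha Hab Hlt Ha'b' Hs Hs').
  - split; [reflexivity|].
    destruct (solves_levels a b Ha Hab Hs) as [Hlev [Hb _]].
    destruct (solves_levels a b' Ha Ha'b' Hs') as [Hlev' [Hb' _]].
    destruct (Rtotal_order b b') as [Hlt | [-> | Hgt]]; [| reflexivity |].
    + pose proof (Hpi1_decr b b' ltac:(lra) Hlt). lra.
    + pose proof (Hpi1_decr b' b ltac:(lra) Hgt). lra.
  - destruct (solves_lt_absurd a' b' a b Ha' Ha'b' Hgt Hab Hs' Hs).
Qed.

Section Construction.

Variables (b0 : R) (g : R -> R).
Hypothesis Hb0 : xh1 < b0.
Hypothesis Hpi1_b0 : pi c1 b0 = 0.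
Hypothesis Hg_cont : forall y, continuous g y.
Hypothesis Hg_anti : forall y y', y <= y' -> g y' <= g y.
Hypothesis Hg_range : forall y, xh1 <= g y <= b0.
Hypothesis Hg_inv : forall y, 0 <= y <= pi c1 xh1 -> pi c1 (g y) = y.
Hypothesis Hg_0 : g 0 = b0.
Hypothesis Hg_xh1 : g (pi c1 xh1) = xh1.

Definition partner (a : R) : R := g (pi c2 a).
Definition partner_eqn (a : R) : R := eqn_lo a (partner a).

Lemma partner_eqn_continuous a : 0 < a -> continuous partner_eqn a.
Proof.
  intros Ha.
  assert (Hp : 0 < partner a) by (pose proof (Hg_range (pi c2 a)); unfold partner; lra).
  assert (continuous partner a).
  { apply (continuous_comp (pi c2) g); [apply pi_continuous, Ha | apply Hg_cont]. }
  pose proof (HFh_cont _ Ha). pose proof (HFm_cont _ Ha). pose proof (Hu_cont _ Ha).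
  pose proof (HFh_cont _ Hp). pose proof (HFm_cont _ Hp). pose proof (Hu_cont _ Hp).
  pose proof (pi_continuous c2 _ Ha).
  unfold partner_eqn, eqn_lo, excess_integral. solve_continuous.
Qed.

Lemma partner_eqn_pos :
  exists p, 0 < p < xh1 /\ p < xh2 /\ pi c2 p < pi c1 xh1 /\ 0 < partner_eqn p.
Proof.
  destruct (at_right_witness _ (Rmin xh1 xh2) (Rmin_pos _ _ Hxh1 Hxh2) (Hboundary b0 Hb0 Hpi1_b0))
    as [a1 [[Ha1 Ha1m] Hpos]].
  pose proof (Rmin_l xh1 xh2). pose proof (Rmin_r xh1 xh2).
  (* [partner_eqn p] is a nonnegative integral over [p, a1] plus [Phi (pi c2 p)], and
     [Phi 0 > 0] is Assumption 7.1(iii) at [a1]. *)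
  set (Phi y := excess_integral c2 0 a1 (g y) + (c1 - c2) * u (g y) - y * (Fm (g y) - Fm a1)).
  assert (HPhi0 : 0 < Phi 0).
  { replace (Phi 0) with (excess_integral c1 0 a1 b0 + (c1 - c2) * u a1)
      by (unfold Phi, excess_integral; rewrite Hg_0; ring). exact Hpos. }
  assert (HPhi_cont : continuous Phi 0).
  { assert (Hg0 : 0 < g 0) by (rewrite Hg_0; lra).
    pose proof (HFh_cont _ Hg0). pose proof (HFm_cont _ Hg0). pose proof (Hu_cont _ Hg0).
    pose proof (Hg_cont 0).
    unfold Phi, excess_integral. solve_continuous. }
  assert (Hpi1xh1 : 0 < pi c1 xh1) by (apply (pi_pos_closed c1 xh1 Hpi1_incr); lra).
  assert (Hev : at_right 0 (fun a => pi c2 a < pi c1 xh1 /\ 0 < Phi (pi c2 a))).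
  { apply filter_and.
    - apply (filterlim_lt (pi c2) 0); [apply pi_at_right | exact Hpi1xh1].
    - apply (pi_at_right c2 (fun y => 0 < Phi y)), (filterlim_gt Phi (Phi 0));
        [exact HPhi_cont | exact HPhi0]. }
  destruct (at_right_witness _ a1 Ha1 Hev) as [p [Hp [Hlev HPhi]]].
  exists p. split; [lra|]. split; [lra|]. split; [exact Hlev|].
  assert (Hex : 0 <= excess_integral c2 (pi c2 p) p a1).
  { apply Hexcess_nonneg; [lra | lra |]. intros x Hx. apply Rlt_le, Hpi2_incr; lra. }
  replace (partner_eqn p) with (excess_integral c2 (pi c2 p) p a1 + Phi (pi c2 p))
    by (unfold partner_eqn, eqn_lo, partner, Phi, excess_integral; ring).
  lra.
Qed.

Lemma partner_level a :
  0 < a <= xh2 -> pi c2 a <= pi c1 xh1 -> pi c1 (partner a) = pi c2 a.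
Proof.
  intros Ha Hle. apply Hg_inv. split; [|exact Hle].
  apply Rlt_le, (pi_pos_closed c2 xh2 Hpi2_incr); exact Ha.
Qed.

Lemma partner_cap p :
  0 < p < xh2 -> pi c2 p < pi c1 xh1 ->
  exists ae, p < ae <= xh2 /\ (forall a, p <= a <= ae -> pi c2 a <= pi c1 xh1) /\
             (partner ae <= xh1 \/ xh2 <= ae).
Proof.
  intros Hp Hlev.
  assert (Hmono : forall a a', 0 < a -> a <= a' -> a' <= xh2 -> pi c2 a <= pi c2 a').
  { intros a a' Ha Haa' Ha'. destruct (Rle_lt_or_eq_dec _ _ Haa') as [Hlt | <-]; [|lra].
    apply Rlt_le, (pi_incr_closed c2 xh2 Hpi2_incr Hxh2); lra. }
  destruct (Rle_lt_dec (pi c2 xh2) (pi c1 xh1)) as [Hle | Hgt].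
  - exists xh2. split; [lra|]. split; [|right; lra].
    intros a Ha. pose proof (Hmono a xh2 ltac:(lra) ltac:(lra) ltac:(lra)). lra.
  - destruct (IVT_decreasing (fun a => pi c1 xh1 - pi c2 a) p xh2) as [ae [Hae Hlev_ae]]; try lra.
    { intros z Hz. apply continuous_Rminus; [apply continuous_const | apply pi_continuous; lra]. }
    assert (Heq : pi c2 ae = pi c1 xh1) by lra.
    exists ae. split.
    { split; [|lra]. destruct (Rle_lt_or_eq_dec _ _ (proj1 Hae)) as [Hlt | <-]; lra. }
    split.
    + intros a Ha. rewrite <- Heq. apply Hmono; lra.
    + left. unfold partner. rewrite Heq, Hg_xh1. lra.
Qed.

Lemma partner_eqn_neg p ae :
  0 < p < xh1 -> p < ae <= xh2 -> (forall a, p <= a <= ae -> pi c2 a <= pi c1 xh1) ->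
  partner ae <= xh1 \/ xh2 <= ae ->
  exists q, p < q <= ae /\ partner_eqn q < 0 /\ q <= partner q.
Proof.
  intros Hp Hae Hcap Hout.
  destruct (Rlt_or_le ae (partner ae)) as [Hlt | Hge].
  - exists ae. split; [lra|]. split; [|lra].
    apply eqn_lo_neg_outside; [lra | exact Hlt | | exact Hout].
    apply partner_level; [lra | apply Hcap; lra].
  - destruct (IVT_decreasing (fun a => partner a - a) p ae) as [q [Hq Hfix]]; try lra.
    + intros z Hz. apply continuous_Rminus; [|apply continuous_id].
      apply (continuous_comp (pi c2) g); [apply pi_continuous; lra | apply Hg_cont].
    + pose proof (Hg_range (pi c2 p)). unfold partner. lra.
    + assert (Hfix' : partner q = q) by lra.
      assert (Hqp : q <> p).
      { intros ->. pose proof (Hg_range (pi c2 p)). unfold partner in Hfix'. lra. }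
      exists q. split; [lra|]. split; [|lra].
      unfold partner_eqn, eqn_lo. rewrite Hfix', excess_integral_refl.
      pose proof (Hu_pos q ltac:(lra)). nra.
Qed.

Lemma partner_solves : exists a b, 0 < a /\ a < b /\ solves a b.
Proof.
  destruct partner_eqn_pos as [p [Hp [Hp2 [Hlev Hpos]]]].
  destruct (partner_cap p ltac:(lra) Hlev) as [ae [Hae [Hcap Hout]]].
  destruct (partner_eqn_neg p ae Hp Hae Hcap Hout) as [q [Hq [Hneg Hqq]]].
  destruct (IVT_decreasing partner_eqn p q) as [z [Hz Hz0]]; try lra.
  { intros z Hz. apply partner_eqn_continuous. lra. }
  assert (Hzp : z <> p) by (intros ->; lra).
  assert (Hzq : z <> q) by (intros ->; lra).
  assert (Hzb : q <= partner z).
  { enough (partner q <= partner z) by lra. apply Hg_anti.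
    destruct (Rle_lt_or_eq_dec z q (proj2 Hz)) as [Hlt | ->]; [|lra].
    apply Rlt_le, (pi_incr_closed c2 xh2 Hpi2_incr Hxh2); lra. }
  assert (Hlevel : pi c1 (partner z) = pi c2 z) by (apply partner_level; [lra | apply Hcap; lra]).
  exists z, (partner z). split; [lra|]. split; [lra|]. split; [exact Hz0|].
  pose proof (eqn_hi_sub_eqn_lo z (partner z)) as E. rewrite Hlevel in E.
  fold (partner_eqn z) in E. lra.
Qed.

End Construction.

Lemma solves_exists : exists a b, 0 < a /\ a < b /\ solves a b.
Proof.
  destruct Hpi1_neg as [B [HB HBneg]].
  assert (Hpi1xh1 : 0 < pi c1 xh1) by (apply (pi_pos_closed c1 xh1 Hpi1_incr); lra).
  destruct (IVT_decreasing (pi c1) xh1 B) as [b0 [Hb0 Hpi1_b0]]; try lra.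
  { intros z Hz. apply pi_continuous. lra. }
  assert (Hb0' : xh1 < b0).
  { destruct (Rle_lt_or_eq_dec _ _ (proj1 Hb0)) as [Hlt | <-]; lra. }
  destruct (decreasing_inverse (pi c1) xh1 b0)
    as [g [Hg_cont [Hg_anti [Hg_range [Hg_inv Hg_left]]]]].
  - lra.
  - intros x Hx. apply pi_continuous. lra.
  - intros x y Hx Hxy Hy. apply Hpi1_decr; lra.
  - rewrite Hpi1_b0 in Hg_inv.
    apply (partner_solves b0 g); auto.
    + rewrite <- Hpi1_b0. apply Hg_left. lra.
    + apply Hg_left. lra.
Qed.

Definition lambda (a b : R) : R :=
  / (Fm b - Fm a) * (Fh b - Fh a + c1 * u b - c2 * u a).

Lemma solves_iff_lambda a b :
  0 < a -> a < b -> solves a b <-> lambda a b = pi c1 b /\ lambda a b = pi c2 a.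
Proof.
  intros Ha Hab. pose proof (HFm_incr a b Ha Hab) as HM.
  assert (Ehi : eqn_hi a b = (Fm b - Fm a) * (lambda a b - pi c1 b))
    by (unfold eqn_hi, excess_integral, lambda; field; lra).
  assert (Elo : eqn_lo a b = (Fm b - Fm a) * (lambda a b - pi c2 a))
    by (unfold eqn_lo, excess_integral, lambda; field; lra).
  unfold solves. rewrite Ehi, Elo. split.
  - intros [Hlo Hhi].
    apply Rmult_integral in Hlo. apply Rmult_integral in Hhi. lra.
  - intros [H1 H2]. split; [rewrite H2 | rewrite H1]; ring.
Qed.

End FreeBoundary.

(** * Scale and speed densities *)

Lemma ex_RInt_pos (f : R -> R) a b :
  (forall x, 0 < x -> continuous f x) -> 0 < a -> 0 < b -> ex_RInt f a b.
Proof.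
  intros Hf Ha Hb. apply (ex_RInt_continuous (V := R_CompleteNormedModule)).
  intros z Hz. apply Hf. pose proof (Rmin_pos a b Ha Hb). lra.
Qed.

Lemma RInt_sub_base (f : R -> R) a b :
  (forall x, 0 < x -> continuous f x) -> 0 < a -> 0 < b ->
  RInt f a b = RInt f 1 b - RInt f 1 a.
Proof.
  intros Hf Ha Hb.
  assert (E : RInt f 1 a + RInt f a b = RInt f 1 b).
  { apply (RInt_Chasles (V := R_CompleteNormedModule)); apply ex_RInt_pos; auto; lra. }
  lra.
Qed.

Lemma is_derive_RInt_base (f : R -> R) x :
  (forall x, 0 < x -> continuous f x) -> 0 < x -> is_derive (RInt f 1) x (f x).
Proof.
  intros Hf Hx.
  apply (is_derive_RInt (V := R_CompleteNormedModule) f (RInt f 1) 1); [|now apply Hf].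
  apply (locally_interval _ x 0 p_infty); [exact Hx | exact I |].
  intros y Hy _. apply RInt_correct, ex_RInt_pos; auto; lra.
Qed.

Lemma continuous_RInt_base (f : R -> R) x :
  (forall x, 0 < x -> continuous f x) -> 0 < x -> continuous (RInt f 1) x.
Proof.
  intros Hf Hx. apply (ex_derive_continuous (V := R_NormedModule)).
  exists (f x). now apply is_derive_RInt_base.
Qed.

Definition half_inv_sdens (mu sigma : R -> R) (x : R) : R := / (2 * sdens mu sigma x).

Definition diffusion_solves (mu sigma h : R -> R) (c1 c2 a b : R) : Prop :=
  solves h mu (RInt (fun x => h x * mdens mu sigma x) 1) (RInt (mdens mu sigma) 1)
    (half_inv_sdens mu sigma) c1 c2 a b.

Section Diffusion.

Variables mu sigma h : R -> R.
Hypothesis Hmu : cont_nonneg mu.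
Hypothesis Hsigma : cont_nonneg sigma.
Hypothesis Hsigma_pos : forall x, 0 < x -> 0 < sigma x.
Hypothesis Hh : forall x, 0 < x -> continuous h x.

Local Notation s := (sdens mu sigma).
Local Notation m := (mdens mu sigma).
Local Notation u := (half_inv_sdens mu sigma).
Local Notation Fh := (RInt (fun x => h x * mdens mu sigma x) 1).
Local Notation Fm := (RInt (mdens mu sigma) 1).

Lemma sigma_sqr_pos x : 0 < x -> 0 < sigma x ^ 2.
Proof. intros Hx. apply pow_lt, Hsigma_pos, Hx. Qed.

Lemma drift_continuous x : 0 < x -> continuous (fun y => 2 * mu y / sigma y ^ 2) x.
Proof.
  intros Hx. pose proof (cont_nonneg_continuous mu x Hmu Hx).
  pose proof (cont_nonneg_continuous sigma x Hsigma Hx). pose proof (sigma_sqr_pos x Hx).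
  solve_continuous. lra.
Qed.

Lemma sdens_continuous x : 0 < x -> continuous s x.
Proof.
  intros Hx. unfold sdens.
  pose proof (continuous_RInt_base _ x drift_continuous Hx). solve_continuous.
Qed.

Lemma mdens_pos x : 0 < x -> 0 < m x.
Proof.
  intros Hx. apply Rinv_0_lt_compat, Rmult_lt_0_compat; [now apply sigma_sqr_pos | apply exp_pos].
Qed.

Lemma mdens_continuous x : 0 < x -> continuous m x.
Proof.
  intros Hx. unfold mdens.
  pose proof (cont_nonneg_continuous sigma x Hsigma Hx). pose proof (sdens_continuous x Hx).
  solve_continuous.
  apply Rgt_not_eq, Rmult_lt_0_compat; [now apply sigma_sqr_pos | apply exp_pos].
Qed.

Lemma half_inv_sdens_derive x : 0 < x -> is_derive u x (mu x * m x).
Proof.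
  intros Hx. set (I := RInt (fun y => 2 * mu y / sigma y ^ 2) 1).
  apply (is_derive_ext (fun y => / 2 * exp (I y))).
  { intros y. unfold half_inv_sdens, sdens. fold I. rewrite exp_Ropp.
    change (@eq R (/ 2 * exp (I y)) (/ (2 * / exp (I y)))).
    field. apply Rgt_not_eq, exp_pos. }
  replace (mu x * m x) with (/ 2 * ((2 * mu x / sigma x ^ 2) * exp (I x))).
  2:{ unfold mdens, sdens. fold I. rewrite exp_Ropp. field.
      split; [apply Rgt_not_eq, exp_pos | pose proof (Hsigma_pos x Hx); lra]. }
  apply (is_derive_scal (fun y => exp (I y))).
  apply (is_derive_comp exp I x (exp (I x)) (2 * mu x / sigma x ^ 2)).
  - apply is_derive_exp.
  - apply (is_derive_RInt_base (fun y => 2 * mu y / sigma y ^ 2));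
      [exact drift_continuous | exact Hx].
Qed.

Lemma half_inv_sdens_pos x : 0 < u x.
Proof. apply Rinv_0_lt_compat, Rmult_lt_0_compat; [lra | apply exp_pos]. Qed.

Lemma half_inv_sdens_continuous x : 0 < x -> continuous u x.
Proof.
  intros Hx. apply (ex_derive_continuous (V := R_NormedModule)).
  eexists. now apply half_inv_sdens_derive.
Qed.

Lemma mu_mdens_continuous x : 0 < x -> continuous (fun y => mu y * m y) x.
Proof.
  intros Hx. pose proof (cont_nonneg_continuous mu x Hmu Hx). pose proof (mdens_continuous x Hx).
  solve_continuous.
Qed.

Lemma h_mdens_continuous x : 0 < x -> continuous (fun y => h y * m y) x.
Proof. intros Hx. pose proof (Hh x Hx). pose proof (mdens_continuous x Hx). solve_continuous. Qed.

Lemma Fh_continuous x : 0 < x -> continuous Fh x.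
Proof. apply continuous_RInt_base, h_mdens_continuous. Qed.

Lemma Fm_continuous x : 0 < x -> continuous Fm x.
Proof. apply continuous_RInt_base, mdens_continuous. Qed.

Lemma Fm_incr a b : 0 < a -> a < b -> Fm a < Fm b.
Proof.
  intros Ha Hab.
  assert (Hpos : 0 < RInt m a b).
  { apply RInt_gt_0; [exact Hab | intros x Hx; apply mdens_pos; lra |].
    intros x Hx. apply mdens_continuous. lra. }
  rewrite (RInt_sub_base m a b) in Hpos by (exact mdens_continuous || lra). lra.
Qed.

Lemma RInt_mu_mdens a b : 0 < a -> 0 < b -> RInt (fun x => mu x * m x) a b = u b - u a.
Proof.
  intros Ha Hb. pose proof (Rmin_pos a b Ha Hb).
  apply (is_RInt_unique (V := R_CompleteNormedModule)),
    (is_RInt_derive (V := R_CompleteNormedModule) u).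
  - intros x Hx. apply half_inv_sdens_derive. lra.
  - intros x Hx. apply mu_mdens_continuous. lra.
Qed.

Lemma RInt_excess c L a b : 0 < a -> 0 < b ->
  RInt (fun x => (h x + c * mu x - L) * m x) a b = excess_integral Fh Fm u c L a b.
Proof.
  intros Ha Hb.
  apply (is_RInt_unique (V := R_CompleteNormedModule)).
  apply (is_RInt_ext (fun x => h x * m x + c * (mu x * m x) - L * m x)).
  { intros x _. change (h x * m x + c * (mu x * m x) - L * m x = (h x + c * mu x - L) * m x).
    ring. }
  replace (excess_integral Fh Fm u c L a b) with
    (RInt (fun x => h x * m x) a b + c * RInt (fun x => mu x * m x) a b - L * RInt m a b).
  2:{ rewrite RInt_mu_mdens, !(RInt_sub_base _ a b)
        by (exact h_mdens_continuous || exact mdens_continuous || assumption).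
      unfold excess_integral. ring. }
  apply (is_RInt_minus (V := R_NormedModule)); [apply (is_RInt_plus (V := R_NormedModule)) |];
    [| apply (is_RInt_scal (V := R_NormedModule)) ..];
    apply (RInt_correct (V := R_CompleteNormedModule)), ex_RInt_pos;
    solve [exact h_mdens_continuous | exact mu_mdens_continuous | exact mdens_continuous
          | assumption].
Qed.

Lemma excess_integrand_continuous c L x :
  0 < x -> continuous (fun y => (h y + c * mu y - L) * m y) x.
Proof.
  intros Hx. pose proof (Hh x Hx). pose proof (cont_nonneg_continuous mu x Hmu Hx).
  pose proof (mdens_continuous x Hx). solve_continuous.
Qed.

Lemma excess_integral_nonneg c L a b : 0 < a -> a <= b ->
  (forall x, a < x < b -> L <= h x + c * mu x) -> 0 <= excess_integral Fh Fm u c L a b.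
Proof.
  intros Ha Hab HL. rewrite <- RInt_excess by lra.
  apply RInt_ge_0;
    [exact Hab | apply ex_RInt_pos; [apply excess_integrand_continuous | lra | lra] |].
  intros x Hx. apply Rmult_le_pos; [specialize (HL x Hx); lra | apply Rlt_le, mdens_pos; lra].
Qed.

Lemma excess_integral_nonpos c L a b : 0 < a -> a <= b ->
  (forall x, a < x < b -> h x + c * mu x <= L) -> excess_integral Fh Fm u c L a b <= 0.
Proof.
  intros Ha Hab HL. rewrite <- RInt_excess by lra.
  apply Rle_trans with (RInt (fun _ => 0) a b).
  - apply RInt_le; [exact Hab | apply ex_RInt_pos; [apply excess_integrand_continuous | lra | lra] |
                    apply ex_RInt_const |].
    intros x Hx. rewrite <- (Rmult_0_l (m x)).
    apply Rmult_le_compat_r; [apply Rlt_le, mdens_pos; lra | specialize (HL x Hx); lra].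
  - rewrite RInt_const. apply Req_le, (scal_zero_r (K := R_Ring) (V := R_ModuleSpace)).
Qed.

Lemma excess_at_right c1 c2 L b0 : 0 < b0 ->
  (exists eps, 0 < eps /\ exists delta, 0 < delta /\ forall a, 0 < a -> a < delta ->
     eps <= RInt (fun y => (h y + c1 * mu y - L) * m y) a b0 + (c1 - c2) / (2 * s a)) ->
  at_right 0 (fun a => 0 < excess_integral Fh Fm u c1 L a b0 + (c1 - c2) * u a).
Proof.
  intros Hb0 [eps [Heps [delta [Hdelta Hd]]]].
  exists (mkposreal delta Hdelta). intros a Hball Ha.
  apply Rabs_lt_between' in Hball. simpl in Hball.
  specialize (Hd a Ha ltac:(lra)). rewrite RInt_excess in Hd by lra.
  exact (Rlt_le_trans _ _ _ Heps Hd).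
Qed.

Lemma diffusion_solves_iff c1 c2 a b : 0 < a -> 0 < b ->
  (RInt (fun x => (h x + c2 * mu x - (h a + c2 * mu a)) * m x) a b + (c1 - c2) / (2 * s b) = 0 /\
   RInt (fun x => (h x + c1 * mu x - (h b + c1 * mu b)) * m x) a b + (c1 - c2) / (2 * s a) = 0)
  <-> diffusion_solves mu sigma h c1 c2 a b.
Proof. intros Ha Hb. rewrite !RInt_excess by assumption. reflexivity. Qed.

Lemma lambda_ab_primitives c1 c2 a b : 0 < a -> 0 < b ->
  lambda_ab mu sigma h c1 c2 a b = lambda Fh Fm u c1 c2 a b.
Proof.
  intros Ha Hb. unfold lambda_ab, lambda, Mspeed, half_inv_sdens.
  rewrite !(RInt_sub_base _ a b)
    by (exact h_mdens_continuous || exact mdens_continuous || assumption).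
  unfold Rdiv. ring.
Qed.

Lemma diffusion_free_boundary c1 c2 :
  c1 < c2 -> assumption71 mu sigma h c1 c2 ->
  exists a b, 0 < a /\ a < b /\ diffusion_solves mu sigma h c1 c2 a b /\
    forall a' b', 0 < a' -> a' < b' -> diffusion_solves mu sigma h c1 c2 a' b' -> a' = a /\ b' = b.
Proof.
  intros Hc12 A71.
  destruct A71 as [[h' [_ [Ch _]]] [Hh0 [Hmu0 [xh1 [xh2 [Hxh1 [Hxh2
    [Hpi1_incr [Hpi1_decr [Hpi2_incr [Hpi2_decr [[l [Hl Hlneg]] Hiii]]]]]]]]]]]].
  pose proof (C1_nonneg_at_right h h' Ch) as Hh_0. rewrite Hh0 in Hh_0.
  pose proof (cont_nonneg_at_right mu Hmu) as Hmu_0. rewrite Hmu0 in Hmu_0.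
  assert (Hmu_cont : forall x, 0 < x -> continuous mu x)
    by (intros; now apply cont_nonneg_continuous).
  assert (Hboundary : forall b0, xh1 < b0 -> pi h mu c1 b0 = 0 ->
            at_right 0 (fun a => 0 < excess_integral Fh Fm u c1 0 a b0 + (c1 - c2) * u a)).
  { intros b0 Hb0 Hz. pose proof (excess_at_right c1 c2 _ b0 ltac:(lra) (Hiii b0 Hb0 Hz)) as H.
    unfold pi in Hz. rewrite Hz in H. exact H. }
  destruct (solves_exists h mu Fh Fm u c1 c2 xh1 xh2 Hc12 Hxh1 Hxh2 Hh Hmu_cont
              Fh_continuous Fm_continuous half_inv_sdens_continuous Hh_0 Hmu_0
              (fun x _ => half_inv_sdens_pos x) excess_integral_nonneg excess_integral_nonpos
              Hpi1_incr Hpi1_decr Hpi2_incr Hpi2_decr (is_lim_pinfty_neg _ _ xh1 Hl Hlneg)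
              Hboundary)
    as [a [b [Ha [Hab Hs]]]].
  exists a, b. split; [exact Ha|]. split; [exact Hab|]. split; [exact Hs|].
  intros a' b' Ha' Ha'b'.
  exact (solves_unique h mu Fh Fm u c1 c2 xh1 xh2 Hc12 Hxh1 Hh Hmu_cont
           (fun x _ => half_inv_sdens_pos x) Fm_incr excess_integral_nonneg excess_integral_nonpos
           Hpi1_incr Hpi1_decr Hpi2_incr Hpi2_decr
           a b a' b' Ha Hab Ha' Ha'b' Hs).
Qed.

End Diffusion.

Theorem proposition7p4 (mu sigma h : R -> R) (c1 c2 : R) :
  cont_nonneg mu -> cont_nonneg sigma ->
  (forall x, 0 < x -> 0 < sigma x) ->
  zero_unattainable mu sigma -> infinity_natural mu sigma ->
  0 < c1 -> c1 < c2 ->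
  (forall x, 0 <= x -> 0 <= h x) ->
  assumption71 mu sigma h c1 c2 ->
  let pi1 := fun x => h x + c1 * mu x in
  let pi2 := fun x => h x + c2 * mu x in
  let m := mdens mu sigma in
  let s := sdens mu sigma in
  (exists a b, 0 < a /\ a < b /\
     RInt (fun x => (pi2 x - pi2 a) * m x) a b + (c1 - c2) / (2 * s b) = 0 /\
     RInt (fun x => (pi1 x - pi1 b) * m x) a b + (c1 - c2) / (2 * s a) = 0 /\
     (forall a' b', 0 < a' -> a' < b' ->
        RInt (fun x => (pi2 x - pi2 a') * m x) a' b' + (c1 - c2) / (2 * s b') = 0 ->
        RInt (fun x => (pi1 x - pi1 b') * m x) a' b' + (c1 - c2) / (2 * s a') = 0 ->
        a' = a /\ b' = b)) /\
  (forall a b, 0 < a -> a < b ->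
     ((RInt (fun x => (pi2 x - pi2 a) * m x) a b + (c1 - c2) / (2 * s b) = 0 /\
       RInt (fun x => (pi1 x - pi1 b) * m x) a b + (c1 - c2) / (2 * s a) = 0)
      <-> (lambda_ab mu sigma h c1 c2 a b = pi1 b /\
           lambda_ab mu sigma h c1 c2 a b = pi2 a))).
Proof.
  intros Hmu Hsigma Hsigma_pos _ _ _ Hc12 _ A71 pi1 pi2 m s.
  assert (Hh : forall x, 0 < x -> continuous h x).
  { destruct A71 as [[h' [_ [Ch _]]] _]. intros x Hx. exact (C1_nonneg_continuous h h' x Ch Hx). }
  pose proof (diffusion_solves_iff mu sigma h Hmu Hsigma Hsigma_pos Hh c1 c2) as Hiff.
  destruct (diffusion_free_boundary mu sigma h Hmu Hsigma Hsigma_pos Hh c1 c2 Hc12 A71)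
    as [a [b [Ha [Hab [Hs Huniq]]]]].
  split.
  - destruct (proj2 (Hiff a b Ha ltac:(lra)) Hs) as [Hlo Hhi].
    exists a, b. split; [exact Ha|]. split; [exact Hab|]. split; [exact Hlo|]. split; [exact Hhi|].
    intros a' b' Ha' Hab' Hlo' Hhi'. apply Huniq; [exact Ha' | exact Hab' |].
    apply Hiff; [lra | lra | split; assumption].
  - intros a' b' Ha' Hab'. etransitivity; [apply Hiff; lra |].
    rewrite lambda_ab_primitives by (assumption || lra).
    apply solves_iff_lambda; [| exact Ha' | exact Hab'].
    exact (Fm_incr mu sigma Hmu Hsigma Hsigma_pos).
Qed.
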